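(* Let $n\ge5$, let $\{C_i,C_j,C_k\}$ be a critical triplet in $\mathcal C_{[n]}$, let $C\in\mathcal C_{[n]}$ with $C>F_{ijk}$, and let $A\in \hat S([n])$ with $A\gtrdot F_{ijk}$. Then $C$ covers $A$ in $\hat S([n])$ if and only if the edge $e(C)$ is incident to the vertex $v(A)$ in the tree $T(F_{ijk})$.
   Context: An $X$-tree is a pair $(T,\phi)$ with $T$ a finite tree and $\phi:X\to V(T)$ a map such that every vertex not in $\phi(X)$ has degree at least $3$; a vertex is labeled if it lies in $\phi(X)$. An $X$-forest is a set $\{(A,\mathcal T_A):A\in\pi\}$ where $\pi$ is a set partition of $X$ and each $\mathcal T_A$ is an $A$-tree. Contracting an edge $e=(u,v)$ removes $e$ and identifies $u,v$, the new vertex carrying the union of the labels. Deleting $e$ removes it without changing vertices; it is safe if each of $u,v$ is labeled or has degree greater than $3$. The Tuffley poset $S(X)$ is the set of $X$-forests with $\mathcal F'\le\mathcal F$ iff $\mathcal F'$ is obtained from $\mathcal F$ by a sequence of contractions and safe deletions; covers are single contractions or safe deletions. $\hat S(X)=S(X)\cup\{\hat0,\hat1\}$. $\mathcal C_{X}$ is the set of maximal elements of $S(X)$: trees with leaves labeled bijectively by $X$ and internal vertices unlabeled of degree $3$. Here $X=[n]$. NNI: for $C\in\mathcal C_X$ and an internal edge $\alpha=(u,v)$ separating subtrees $A,B$ at $u$ from $C',D$ at $v$, swapping $B$ with $C'$ or $B$ with $D$ is a nearest neighbor interchange over $\alpha$. A critical triplet is a triple $\{C_i,C_j,C_k\}$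 of elements of $\mathcal C_{[n]}$ such that: (1) $C_i$ has a leaf labeled $x$ whose leaf edge $e_x$ is adjacent to two internal edges $e_{x_1}$ and $e_{x_2}$; (2) $C_j\neq C_i$ and both $C_i,C_j$ cover $F_j$, the element obtained from $C_i$ by contracting $e_{x_1}$; (3) $C_k\ne C_i$ and both $C_i,C_k$ cover $F_k$, obtained from $C_i$ by contracting $e_{x_2}$. The element $F_{ijk}$ is obtained from $F_j$ by (safely) deleting the edge incident to the vertex labeled $x$ (equivalently, obtained in the same way from $F_k$); it consists of an isolated vertex labeled $x$ together with an $([n]\setminus\{x\})$-tree, denoted $T(F_{ijk})$. Every $A\gtrdot F_{ijk}$ in $\hat S([n])$ is obtained from $F_{ijk}$ by adding an edge between the isolated vertex $x$ and a unique vertex of $T(F_{ijk})$, denoted $v(A)$. Every $C\in\mathcal C_{[n]}$ with $C>F_{ijk}$ is obtained from $F_{ijk}$ by subdividing a unique edge of $T(F_{ijk})$, denoted $e(C)$, with a new vertex and joining that new vertex by an edge to the isolated vertex $x$. *)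

(* X-forests, the Tuffley poset S([n]) and its bounded
   extension \hat S([n]), with elements represented by concrete labelled
   graphs, all notions being taken up to label-preserving isomorphism. *)
From mathcomp Require Import all_boot.

Unset Printing Implicit Defensive.

Record graph (n : nat) := Graph {
  gV : finType;
  gadj : rel gV;
  glab : 'I_n -> gV }.

Arguments gV {n} g.
Arguments gadj {n} g _ _.
Arguments glab {n} g _.

Section Defs.
Variable n : nat.
Implicit Types G H K : graph n.

Definition deg G (v : gV G) : nat := #|[pred w | gadj G v w]|.

Definition labeled G (v : gV G) : bool := [exists i, glab G i == v].

Definition acyclic G : Prop :=
  forall s : seq (gV G), uniq s -> 3 <= size s -> ~~ cycle (gadj G) s.

(* An [n]-forest: a finite forest with a labelling map such that every
   unlabeled vertex has degree at least 3.  (The set partition of [n] is the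
   one induced by the connected components; every component automatically
   carries a label.) *)
Definition is_Xforest G : Prop :=
  [/\ symmetric (gadj G), irreflexive (gadj G), acyclic G &
      forall v : gV G, ~~ labeled G v -> 3 <= deg G v].

Definition iso G H : Prop :=
  exists f : gV G -> gV H, [/\ bijective f,
    forall p q, gadj H (f p) (f q) = gadj G p q &
    forall i, glab H i = f (glab G i)].

(* H is (isomorphic to) the result of contracting the edge (u,a) of G:
   u and a are identified, the new vertex carrying the union of labels. *)
Definition is_contraction G H (u a : gV G) : Prop :=
  gadj G u a /\
  exists m : gV G -> gV H,
    [/\ forall w, exists p, m p = w,
        m u = m a,
        forall p q, m p = m q -> [\/ p = q, p = u /\ q = a | p = a /\ q = u],
        forall w1 w2, gadj H w1 w2 <->
           (w1 <> w2 /\ exists p q, [/\ m p = w1, m q = w2 & gadj G p q]) &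
        forall i, glab H i = m (glab G i)].

Definition is_deletion G H (u v : gV G) : Prop :=
  gadj G u v /\
  exists m : gV G -> gV H, [/\ bijective m,
    forall p q, gadj H (m p) (m q) <->
       (gadj G p q /\ ~ ((p = u /\ q = v) \/ (p = v /\ q = u))) &
    forall i, glab H i = m (glab G i)].

Definition safe G (u v : gV G) : Prop :=
  (labeled G u \/ 3 < deg G u) /\ (labeled G v \/ 3 < deg G v).

Definition step G H : Prop :=
  exists u v : gV G,
    is_contraction G H u v \/ (safe G u v /\ is_deletion G H u v).

Inductive below : graph n -> graph n -> Prop :=
  | below_iso G H : iso H G -> below G H
  | below_step G H K : step H K -> below G K -> below G H.

(* \hat S([n]) = S([n]) + {\hat 0, \hat 1} *)
Inductive hatS := Bot | Elt of graph n | Top.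

Definition hat_valid (a : hatS) : Prop :=
  match a with Elt G => is_Xforest G | _ => True end.

Definition hat_le (a b : hatS) : Prop :=
  match a, b with
  | Bot, _ => True
  | _, Top => True
  | Elt G, Elt H => below G H
  | _, _ => False
  end.

Definition hat_lt (a b : hatS) : Prop := hat_le a b /\ ~ hat_le b a.

Definition hat_covers (a b : hatS) : Prop :=
  [/\ hat_valid a, hat_valid b, hat_lt a b &
      forall c, hat_valid c -> ~ (hat_lt a c /\ hat_lt c b)].

Definition inC G : Prop :=
  is_Xforest G /\ forall H, is_Xforest H -> below G H -> below H G.

Definition internal_edge G (s t : gV G) : Prop :=
  [/\ gadj G s t, 1 < deg G s & 1 < deg G t].

(* C is (isomorphic to) F with the edge (p,q) subdivided by a new vertex,
   the new vertex being joined to the vertex labeled x *)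
Definition is_subdiv_attach G C (x : 'I_n) (p q : gV G) : Prop :=
  gadj G p q /\
  exists m : option (gV G) -> gV C, [/\ bijective m,
    forall s t, gadj C (m (Some s)) (m (Some t)) <->
       (gadj G s t /\ ~ ((s = p /\ t = q) \/ (s = q /\ t = p))),
    forall s, gadj C (m None) (m (Some s)) <->
       [\/ s = p, s = q | s = glab G x],
    forall s, gadj C (m (Some s)) (m None) <->
       [\/ s = p, s = q | s = glab G x] &
    ~~ gadj C (m None) (m None)] /\
    forall i, glab C i = m (Some (glab G i)).

Definition is_add_edge G A (s t : gV G) : Prop :=
  exists m : gV G -> gV A, [/\ bijective m,
    forall p q, gadj A (m p) (m q) <->
       [\/ gadj G p q, p = s /\ q = t | p = t /\ q = s] &
    forall i, glab A i = m (glab G i)].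

End Defs.

Arguments deg {n} G v.
Arguments labeled {n} G v.
Arguments acyclic {n} G.
Arguments is_Xforest {n} G.
Arguments iso {n} G H.
Arguments is_contraction {n} G H u a.
Arguments is_deletion {n} G H u v.
Arguments safe {n} G u v.
Arguments step {n} G H.
Arguments below {n} _ _.
Arguments Bot {n}.
Arguments Top {n}.
Arguments Elt {n} _.
Arguments hat_valid {n} a.
Arguments hat_le {n} a b.
Arguments hat_lt {n} a b.
Arguments hat_covers {n} a b.
Arguments inC {n} G.
Arguments internal_edge {n} G s t.
Arguments is_subdiv_attach {n} G C x p q.
Arguments is_add_edge {n} G A s t.

From mathcomp Require Import all_boot zify.

(* Count arcs (ordered pairs of adjacent vertices): they drop by at least 2 along every
   contraction or deletion, and by exactly 2 along a contraction in a forest.  C has one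
   edge more than A = T(F_ijk) + {x, v(A)}, so C covers A iff a single step turns C into A;
   that step is not a deletion, since C also has one vertex more than A.  Contracting the
   subdividing vertex into an end of e(C) gives A when v(A) is that end.  Conversely, a
   contraction of C onto A cannot involve x (both ends of e(C) would become neighbours of x),
   and must involve the subdividing vertex (otherwise its image, of degree at most 3, would
   be v(A), of degree at least 4); on the remaining vertices it is then an injective
   label-preserving graph map T(F_ijk) -> A, hence the identity because unlabelled vertices
   have degree at least 3, and so v(A) is the end of e(C) that was merged. *)

Set Implicit Arguments.
Unset Strict Implicit.

(** * Counting arcs *)

Lemma cardsD2 (T : finType) (P : {set T}) e1 e2 :
  e1 \in P -> e2 \in P -> e1 != e2 -> #|P :\ e1 :\ e2| + 2 = #|P|.
Proof.
move=> h1 h2 ne.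
by rewrite (cardsD1 e1 P) (cardsD1 e2 (P :\ e1)) h1 !inE eq_sym ne h2 addnC addnA.
Qed.

Section Arcs.
Variable n : nat.
Implicit Types G H K : graph n.

Definition arcs G := #|[set e : gV G * gV G | gadj G e.1 e.2]|.

Definition simple_graph G := symmetric (gadj G) /\ irreflexive (gadj G).

Lemma Xforest_simple G : is_Xforest G -> simple_graph G.
Proof. by case. Qed.

Lemma iso_refl G : iso G G.
Proof. by exists id; split => //; exists id. Qed.

Lemma iso_sym G H : iso G H -> iso H G.
Proof.
case=> f [[g fK gK] fadj flab]; exists g; split.
- by exists f.
- by move=> p q; rewrite -fadj !gK.
- by move=> i; rewrite flab fK.
Qed.

Lemma iso_arcs G H : iso G H -> arcs G = arcs H.
Proof.
case=> f [[g fK gK] fadj _].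
rewrite /arcs -(card_in_imset (f := fun e => (f e.1, f e.2))); last first.
  by move=> [p1 q1] [p2 q2] _ _ [/(can_inj fK) -> /(can_inj fK) ->].
apply: eq_card => -[w1 w2]; rewrite !inE /=; apply/imsetP/idP.
- by case=> -[p q]; rewrite inE /= => hpq [-> ->]; rewrite fadj.
- move=> h; exists (g w1, g w2); last by rewrite !gK.
  by rewrite inE /= -fadj !gK.
Qed.

Lemma arcs_image_leq G H (m : gV G -> gV H) (u v : gV G) :
  simple_graph G -> gadj G u v ->
  (forall w1 w2, gadj H w1 w2 -> exists p q, [/\ m p = w1, m q = w2, gadj G p q &
     ~ ((p = u /\ q = v) \/ (p = v /\ q = u))]) ->
  arcs H + 2 <= arcs G.
Proof.
move=> [sy ir] huv hH.
have uv : (u, v) != (v, u).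
  by apply/eqP => -[e _]; move: huv; rewrite e ir.
rewrite /arcs -(cardsD2 (e1 := (u, v)) (e2 := (v, u))) ?inE /= 1?(sy v u) // leq_add2r.
apply: leq_trans (leq_imset_card (fun e => (m e.1, m e.2)) _).
apply: subset_leq_card; apply/subsetP => -[w1 w2]; rewrite inE /= => /hH [p [q [<- <- hpq nuv]]].
apply/imsetP; exists (p, q) => //.
by rewrite !inE /= hpq !xpair_eqE andbT; apply/andP; split; apply/negP => /andP [/eqP e1 /eqP e2];
  apply: nuv; [right | left].
Qed.

Lemma step_simple G H : simple_graph G -> step G H -> simple_graph H.
Proof.
move=> [sy ir] [u [v [[_ [m [_ _ _ madj _]]] | [_ [_ [m [[mi mK Km] madj _]]]]]]].
- split.
  + move=> w1 w2; apply/idP/idP => /madj [ne [p [q [e1 e2 hpq]]]]; apply/madj;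
      (split; [by move=> e; apply: ne | by exists q, p; rewrite sy]).
  + by move=> w; apply/negP => /madj [].
- split.
  + move=> w1 w2; rewrite -(Km w1) -(Km w2).
    by apply/idP/idP => /madj [hh nn]; apply/madj; rewrite sy; split => // hh2; apply: nn; tauto.
  + by move=> w; rewrite -(Km w); apply/negbTE/negP => /madj []; rewrite ir.
Qed.

Lemma step_arcs G H : simple_graph G -> step G H -> arcs H + 2 <= arcs G.
Proof.
move=> sG [u [v [[huv [m [_ muv _ madj _]]] | [_ [huv [m [[mi _ Km] madj _]]]]]]];
  apply: (arcs_image_leq (m := m) sG huv) => w1 w2.
- case/madj => ne [p [q [e1 e2 hpq]]]; exists p, q; split => // -[] [e3 e4]; apply: ne;
    by rewrite -e1 -e2 e3 e4.
- rewrite -(Km w1) -(Km w2) => /madj [hh nn]; by exists (mi w1), (mi w2).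
Qed.

Lemma below_arcs G H : below G H -> simple_graph H -> iso H G \/ arcs G + 2 <= arcs H.
Proof.
elim=> [G0 H0 hi | G0 H0 K0 hs _ IH] sH; first by left.
right; have := step_arcs sH hs.
case: (IH (step_simple sH hs)) => [/iso_arcs -> // | hK hKH].
by apply: leq_trans hKH; apply: leq_trans hK _; apply: leq_addr.
Qed.

Lemma contraction_iso G H K (u a : gV G) :
  is_contraction G H u a -> iso H K -> is_contraction G K u a.
Proof.
move=> [hua [m [msurj mua minj madj mlab]]] [f [[g fK gK] fadj flab]].
split => //; exists (f \o m); split => /=.
- by move=> w; have [p hp] := msurj (g w); exists p; rewrite hp gK.
- by rewrite mua.
- by move=> p q /(can_inj fK); apply: minj.
- move=> w1 w2; rewrite -(gK w1) -(gK w2) fadj madj.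
  split=> -[ne [p [q [e1 e2 hpq]]]]; split.
  + by move/(can_inj fK).
  + by exists p, q; rewrite e1 e2.
  + by move=> e; apply: ne; rewrite e.
  + by exists p, q; split => //; apply: (can_inj fK).
- by move=> i; rewrite flab mlab.
Qed.

Lemma Xforest_triangle_free G (x y z : gV G) :
  is_Xforest G -> gadj G x y -> gadj G y z -> ~~ gadj G x z.
Proof.
move=> [sy ir ac _] hxy hyz; apply/negP => hxz.
have ne s t : gadj G s t -> s != t by apply: contraTneq => ->; rewrite ir.
have := ac [:: x; y; z]; rewrite /= !inE negb_or (ne _ _ hxy) (ne _ _ hxz) (ne _ _ hyz).
by rewrite hxy hyz (sy z) hxz => /(_ isT isT).
Qed.

Lemma contraction_arcs G H (u a : gV G) :
  is_Xforest G -> is_contraction G H u a -> arcs H + 2 = arcs G.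
Proof.
move=> XG hc; apply/eqP; rewrite eqn_leq.
have sG := Xforest_simple XG; have [sy ir] := sG.
have -> /= : arcs H + 2 <= arcs G by apply: (step_arcs sG); exists u, a; left.
case: hc => hua [m [_ mua minj madj _]].
have ua : (u, a) != (a, u) by apply/eqP => -[e _]; move: hua; rewrite e ir.
rewrite /arcs -(cardsD2 (e1 := (u, a)) (e2 := (a, u))) ?inE /= 1?(sy a u) // leq_add2r.
rewrite -(card_in_imset (f := fun e => (m e.1, m e.2))).
- apply: subset_leq_card; apply/subsetP => w /imsetP [[p q]].
  rewrite !inE /= !xpair_eqE => /and3P [n1 n2 hpq] -> /=.
  apply/madj; split; last by exists p, q.
  by case/minj => [e | [e1 e2] | [e1 e2]]; move: hpq n1 n2; rewrite ?e ?e1 ?e2 ?ir ?eqxx.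
- move=> [p1 q1] [p2 q2]; rewrite !inE /= !xpair_eqE.
  move=> /and3P [n11 n12 h1] /and3P [n21 n22 h2] [/minj hp /minj hq].
  move: n11 n12 n21 n22 h1 h2.
  case: hp => [<- | [-> ->] | [-> ->]]; case: hq => [<- | [-> ->] | [-> ->]] //;
    rewrite ?eqxx ?andbT ?ir //= => _ _ _ _.
  all: rewrite ?[gadj G _ q1]sy => h1 h2; exfalso; move: h2; apply/negP.
  all: by apply: (Xforest_triangle_free XG h1); rewrite // sy.
Qed.

Lemma add_edge_arcs G A (s t : gV G) : simple_graph G -> s != t -> ~~ gadj G s t ->
  is_add_edge G A s t -> arcs A = arcs G + 2.
Proof.
move=> [sy ir] st nst [m [[mi mK Km] madj _]].
have arcsA : [set e : gV A * gV A | gadj A e.1 e.2] =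
    [set (m e.1, m e.2) | e in (s, t) |: ((t, s) |: [set e | gadj G e.1 e.2])].
  apply/setP => -[w1 w2]; rewrite inE /=; apply/idP/imsetP.
  - rewrite -(Km w1) -(Km w2) => /madj hw; exists (mi w1, mi w2) => //.
    by rewrite !inE /= !xpair_eqE; case: hw => [-> | [-> ->] | [-> ->]]; rewrite ?eqxx ?orbT.
  - case=> -[p q]; rewrite !inE /= !xpair_eqE => hpq [-> ->]; apply/madj.
    by case/or3P: hpq => [/andP [/eqP -> /eqP ->] | /andP [/eqP -> /eqP ->] | ?];
      [apply: Or32 | apply: Or33 | apply: Or31].
rewrite /arcs arcsA card_in_imset; last first.
  by move=> [p1 q1] [p2 q2] _ _ [/(can_inj mK) -> /(can_inj mK) ->].
rewrite !cardsU1 !inE /= (negbTE nst) sy (negbTE nst) !xpair_eqE (negbTE st).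
by rewrite /= add1n addn2.
Qed.

Lemma deletion_card G H (u v : gV G) : is_deletion G H u v -> #|gV G| = #|gV H|.
Proof. by move=> [_ [m [bm _ _]]]; apply: bij_eq_card bm. Qed.

Lemma iso_card G H : iso G H -> #|gV G| = #|gV H|.
Proof. by move=> [f [bf _ _]]; apply: bij_eq_card bf. Qed.

Lemma covers_of_contraction (A C : graph n) (s t : gV C) :
  is_Xforest A -> is_Xforest C -> is_contraction C A s t -> arcs C = arcs A + 2 ->
  hat_covers (Elt A) (Elt C).
Proof.
move=> XA XC hc hCA.
have sA := Xforest_simple XA.
have AC : below A C.
  by apply: (@below_step n A C A); [exists s, t; left | apply/below_iso/iso_refl].
split => //.
- by split => //= /below_arcs /(_ sA) [/iso_arcs|]; lia.
- case=> [|G|] XG [[AG GA] [GC CG]] //=.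
  case: (below_arcs AG (Xforest_simple XG)) => [hi | hAG].
    by case: GA; apply/below_iso/iso_sym.
  case: (below_arcs GC (Xforest_simple XC)) => [hi | hGC].
    by case: CG; apply/below_iso/iso_sym.
  lia.
Qed.

Lemma contraction_of_covers (A C : graph n) : is_Xforest C ->
  arcs C = arcs A + 2 -> hat_covers (Elt A) (Elt C) ->
  (exists s t, is_contraction C A s t) \/ #|gV C| = #|gV A|.
Proof.
move=> XC hCA [_ _ [/= AC CA] _].
have sC := Xforest_simple XC.
inversion AC as [? ? hi | ? ? K hs KA]; subst.
  by case: CA; apply/below_iso/iso_sym.
have := step_arcs sC hs.
case: (below_arcs KA (step_simple sC hs)) => [hi | ]; last lia.
case: hs => s [t [hc | [_ hd]]] _.
- by left; exists s, t; apply: contraction_iso hc hi.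
- by right; rewrite (deletion_card hd) (iso_card hi).
Qed.
End Arcs.

(** * Rigidity of X-forests *)

Section Acyclic.
Variables (n : nat) (G : graph n).
Hypothesis sym_adj : symmetric (gadj G).
Hypothesis irr_adj : irreflexive (gadj G).
Hypothesis acyc : acyclic G.

(* A chord from the start of a simple path would close a cycle. *)
Lemma acyclic_path_nbr (z w : gV G) (s : seq (gV G)) :
  uniq (z :: s) -> path (gadj G) z s -> w \in s -> gadj G z w -> w = head z s.
Proof.
move=> us ps ws zw; case: s us ps ws => // z2 s us ps ws /=.
case: (eqVneq w z2) => // wz2; exfalso.
set l := take (index w (z2 :: s)).+1 (z2 :: s).
have lastl : last z l = w.
  by rewrite -nth_last size_takel ?index_mem //= nth_take ?nth_index.
have iw0 : 0 < index w (z2 :: s) by rewrite /= eq_sym (negbTE wz2).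
have ul : uniq (z :: l).
  case/andP: us => zs us; rewrite cons_uniq take_uniq // andbT.
  by apply: contra zs; apply: mem_take.
have szl : 3 <= size (z :: l).
  have li : size l = (index w (z2 :: s)).+1 by rewrite size_takel // index_mem.
  by change (1 < size l); rewrite li.
have cl : cycle (gadj G) (z :: l).
  change (path (gadj G) z (rcons l z)).
  by rewrite rcons_path lastl sym_adj zw andbT take_path.
by move: (acyc ul szl); rewrite cl.
Qed.

(* Otherwise simple paths inside N could be extended forever. *)
Lemma acyclic_no_core (N : {set gV G}) :
  (forall r, r \in N -> exists w1 w2,
     [/\ w1 \in N, w2 \in N, w1 != w2, gadj G r w1 & gadj G r w2]) ->
  N = set0.
Proof.
move=> core; apply/setP => r0; rewrite inE; apply/negP => r0N.
have long_paths k : exists z s, [/\ uniq (z :: s), all (mem N) (z :: s),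
    path (gadj G) z s & size s = k].
  elim: k => [|k [z [s [us Ns ps sk]]]]; first by exists r0, [::]; rewrite /= r0N.
  have zN : z \in N by case/andP: Ns.
  have [w1 [w2 [w1N w2N w12 zw1 zw2]]] := core z zN.
  have [w [wN zw wh]] : exists w, [/\ w \in N, gadj G z w & w != head z s].
    case: (eqVneq w1 (head z s)) => [e | ]; last by exists w1.
    by exists w2; split => //; rewrite -e eq_sym.
  exists w, (z :: s); split; last by rewrite /= sk.
  - rewrite cons_uniq us andbT inE negb_or; apply/andP; split.
      by apply: contraTneq zw => ->; rewrite irr_adj.
    by apply: contra wh => /(acyclic_path_nbr us ps) ->.
  - by rewrite /= wN.
  - by rewrite /= sym_adj zw ps.
have [z [s [us Ns _ sk]]] := long_paths #|N|.
have sub : {subset z :: s <= enum N} by move=> w /(allP Ns); rewrite mem_enum.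
have := uniq_leq_size us sub.
by rewrite -cardE /= sk ltnn.
Qed.
End Acyclic.

Section Rigidity.
Variables (n : nat) (G : graph n) (g : gV G -> gV G).
Hypothesis XG : is_Xforest G.
Hypothesis g_inj : injective g.
Hypothesis g_lab : forall i, g (glab G i) = glab G i.
Hypothesis g_adj : forall r1 r2, gadj G r1 r2 -> gadj G (g r1) (g r2).

(* Two fixed neighbours c1, c2 of a moved vertex r would give the 4-cycle r c1 (g r) c2. *)
Lemma moved_fixed_nbrs (r : gV G) : g r != r ->
  #|[pred w | gadj G r w & g w == w]| <= 1.
Proof.
have [sy ir ac _] := XG.
move=> moved; rewrite leqNgt; apply/negP => /card_gt1P [c1 [c2 [/andP [rc1 /eqP f1] /andP [rc2 /eqP f2] c12]]].
have grc k : gadj G r k -> g k = k -> gadj G (g r) k by move=> rk fk; rewrite -fk g_adj.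
have ne k : gadj G r k -> g k = k -> (r != k) && (g r != k).
  move=> rk fk; apply/andP; split; first by apply: contraTneq rk => ->; rewrite ir.
  by apply: contra moved => /eqP e; rewrite -(inj_eq g_inj) e fk.
have /andP [r1 gr1] := ne _ rc1 f1; have /andP [r2 gr2] := ne _ rc2 f2.
have u4 : uniq [:: r; c1; g r; c2].
  by rewrite /= !inE !negb_or r1 r2 eq_sym moved eq_sym gr1 c12 gr2.
have := ac _ u4 isT; rewrite /= rc1 (sy c1) grc // (grc c2) // (sy c2) rc2.
by [].
Qed.

Lemma Xforest_rigid : g =1 id.
Proof.
have [sy ir ac dg] := XG.
suff N0 : [set r | g r != r] = set0.
  by move=> r; apply/eqP/negPn; move: (in_set0 r); rewrite -N0 inE => ->.
apply: acyclic_no_core => // r; rewrite inE => moved.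
have unl : ~~ labeled G r.
  by apply/existsP => -[i /eqP e]; move: moved; rewrite -e g_lab eqxx.
have : 1 < #|[pred w | gadj G r w & g w != w]|.
  have split_nbrs : deg G r = #|[pred w | gadj G r w & g w == w]| +
                             #|[pred w | gadj G r w & g w != w]|.
    rewrite /deg -(cardID [pred w | g w == w]); congr (_ + _); apply: eq_card => w //=.
    by rewrite !inE andbC.
  have := dg r unl; have := moved_fixed_nbrs moved; lia.
move/card_gt1P => [w1 [w2 [/andP [r1 m1] /andP [r2 m2] w12]]].
by exists w1, w2; rewrite !inE.
Qed.
End Rigidity.

(** * Isolating x *)

Section Leaf.
Variables (n : nat) (G H : graph n) (x : 'I_n).

Lemma deg1_nbr (l u : gV G) : deg G l = 1 -> gadj G l u -> forall r, gadj G l r -> r = u.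
Proof.
move=> /mem_card1 [z hz] lu r lr.
by move: (hz r) (hz u); rewrite !inE /= lr lu => /esym/eqP -> /esym/eqP ->.
Qed.

Lemma contraction_single_nbr (u a : gV G) : irreflexive (gadj G) ->
  (forall r, gadj G (glab G x) r -> r = u) -> gadj G (glab G x) u -> a != glab G x ->
  is_contraction G H u a -> exists w, forall r, gadj H (glab H x) r -> r = w.
Proof.
move=> ir nbr hxu ax [_ [m [_ _ minj madj mlab]]]; exists (m u) => r.
rewrite mlab => /madj [_ [p [q [/minj ep <- hpq]]]].
case: ep => [ep | [_ e] | [_ e]].
- by rewrite ep in hpq; rewrite (nbr _ hpq).
- by move: ax; rewrite e eqxx.
- by move: hxu; rewrite e ir.
Qed.

Lemma deletion_isolates (w y : gV G) :
  (forall r, gadj G (glab G x) r -> r = w) ->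
  is_deletion G H (glab G x) y -> forall r, ~~ gadj H (glab H x) r.
Proof.
move=> nbr [hy [m [[mi _ Km] madj mlab]]] r.
rewrite -(Km r) mlab; apply/negP => /madj [h []]; left; split => //.
by rewrite (nbr _ h) (nbr _ hy).
Qed.
End Leaf.

Lemma isolated_nbr_neq n (G : graph n) (z p q : gV G) :
  symmetric (gadj G) -> (forall r, ~~ gadj G z r) -> gadj G p q -> q != z.
Proof. by move=> sy iso pq; apply: contraTneq pq => ->; rewrite sy (negbTE (iso p)). Qed.

(** * Attaching x to a subdivided edge *)

Section AddEdge.
Variables (n : nat) (G : graph n) (s t : gV G).

Definition add_edge : graph n :=
  @Graph n (gV G) [rel r1 r2 | [|| gadj G r1 r2, (r1 == s) && (r2 == t) | (r1 == t) && (r2 == s)]]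
    (glab G).

Lemma add_edgeP : is_add_edge G add_edge s t.
Proof.
exists id; split => //; first by exists id.
move=> r1 r2 /=; split.
- by case/or3P => [? | /andP [/eqP -> /eqP ->] | /andP [/eqP -> /eqP ->]];
    [apply: Or31 | apply: Or32 | apply: Or33].
- by case=> [-> | [-> ->] | [-> ->]]; rewrite ?eqxx ?orbT.
Qed.

Lemma add_edge_card (A : graph n) : is_add_edge G A s t -> #|gV A| = #|gV G|.
Proof. by move=> [m [bm _ _]]; rewrite (bij_eq_card bm). Qed.
End AddEdge.

Lemma subdiv_attach_sym n (F C : graph n) (x : 'I_n) (p q : gV F) :
  symmetric (gadj F) -> is_subdiv_attach F C x p q -> is_subdiv_attach F C x q p.
Proof.
move=> sy [hpq [m [[bm SS NS SN NN] lab]]]; split; first by rewrite sy.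
exists m; split => //; split => //.
- by move=> s t; rewrite SS; split => -[h1 h2]; split => // h3; apply: h2; tauto.
- by move=> s; rewrite NS; split; case; eauto using Or31, Or32, Or33.
- by move=> s; rewrite SN; split; case; eauto using Or31, Or32, Or33.
Qed.

Section SubdivAttach.
Variables (n : nat) (F C : graph n) (x : 'I_n) (p q : gV F).
Local Notation xF := (glab F x).
Hypothesis sym_F : symmetric (gadj F).
Hypothesis irr_F : irreflexive (gadj F).
Hypothesis x_isolated : forall r, ~~ gadj F xF r.
Hypothesis p_neq_x : p != xF.
Hypothesis adj_pq : gadj F p q.
(* An unpacked [is_subdiv_attach F C x p q]; [mc None] is the subdividing vertex. *)
Variables (mc : option (gV F) -> gV C) (mci : gV C -> option (gV F)).
Hypotheses (mcK : cancel mc mci) (mciK : cancel mci mc).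
Hypothesis adj_SS : forall s t, gadj C (mc (Some s)) (mc (Some t)) <->
  gadj F s t /\ ~ ((s = p /\ t = q) \/ (s = q /\ t = p)).
Hypothesis adj_NS : forall s, gadj C (mc None) (mc (Some s)) <-> [\/ s = p, s = q | s = xF].
Hypothesis adj_SN : forall s, gadj C (mc (Some s)) (mc None) <-> [\/ s = p, s = q | s = xF].
Hypothesis adj_NN : ~~ gadj C (mc None) (mc None).
Hypothesis lab_C : forall i, glab C i = mc (Some (glab F i)).

Lemma subdiv_surj (c : gV C) : exists o, c = mc o.
Proof. by exists (mci c). Qed.

(* Contracting the new vertex into p sends the vertex [mc o] of C to [odflt p o];
   this is what that does to adjacency. *)
Lemma subdiv_merge_adj (r1 r2 : gV F) :
  [\/ gadj F r1 r2, r1 = xF /\ r2 = p | r1 = p /\ r2 = xF] <->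
  r1 <> r2 /\ exists o1 o2, [/\ odflt p o1 = r1, odflt p o2 = r2 & gadj C (mc o1) (mc o2)].
Proof.
split.
- move=> h; split.
    move=> e; subst r2.
    by case: h => [| [-> e] | [-> e]]; rewrite ?irr_F //; move: p_neq_x; rewrite e eqxx.
  case: h => [h | [-> ->] | [-> ->]].
  + case: (boolP ((r1 == p) && (r2 == q))) => [/andP [/eqP -> /eqP e2] | n1].
      by exists None, (Some r2); split => //; apply/adj_NS; rewrite e2; apply: Or32.
    case: (boolP ((r1 == q) && (r2 == p))) => [/andP [/eqP e1 /eqP ->] | n2].
      by exists (Some r1), None; split => //; apply/adj_SN; rewrite e1; apply: Or32.
    exists (Some r1), (Some r2); split => //; apply/adj_SS.
    by split => // -[] [e1 e2]; [move: n1 | move: n2]; rewrite e1 e2 !eqxx.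
  + by exists (Some xF), None; split => //; apply/adj_SN; apply: Or33.
  + by exists None, (Some xF); split => //; apply/adj_NS; apply: Or33.
- move=> [ne [o1 [o2 [e1 e2]]]]; subst r1 r2.
  case: o1 o2 ne => [s1|] [s2|] /= ne.
  + by case/adj_SS => h _; apply: Or31.
  + by case/adj_SN => e; subst s1; [exfalso; apply: ne | apply: Or31; rewrite sym_F | apply: Or32].
  + by case/adj_NS => e; subst s2; [exfalso; apply: ne | apply: Or31 | apply: Or33].
  + by rewrite (negbTE adj_NN).
Qed.

Lemma subdiv_contract_new (A : graph n) :
  is_add_edge F A xF p -> is_contraction C A (mc None) (mc (Some p)).
Proof.
move=> [mA [[mAi mAK mAiK] adj_A lab_A]].
pose mm c := mA (odflt p (mci c)).
have mm_mc o : mm (mc o) = mA (odflt p o) by rewrite /mm mcK.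
split; first by apply/adj_NS/Or31.
exists mm; split.
- by move=> w; exists (mc (Some (mAi w))); rewrite mm_mc mAiK.
- by rewrite !mm_mc.
- move=> c1 c2; have [o1 ->] := subdiv_surj c1; have [o2 ->] := subdiv_surj c2.
  rewrite !mm_mc => /(can_inj mAK).
  by case: o1 o2 => [r1|] [r2|] /= e; subst; [apply: Or31 | apply: Or33 | apply: Or32 | apply: Or31].
- move=> w1 w2; rewrite -(mAiK w1) -(mAiK w2) adj_A subdiv_merge_adj.
  split=> -[ne [d1 [d2 [e1 e2 hd]]]]; split.
  + by move/(can_inj mAK).
  + by exists (mc d1), (mc d2); rewrite !mm_mc e1 e2.
  + by move=> e; apply: ne; rewrite e.
  + exists (mci d1), (mci d2); rewrite !mciK; split => //; apply: (can_inj mAK).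
    * by rewrite -e1.
    * by rewrite -e2.
- by move=> i; rewrite lab_A lab_C mm_mc.
Qed.

Lemma subdiv_new_neq (r : gV F) : mc None <> mc (Some r).
Proof. by move/(can_inj mcK). Qed.

Lemma subdiv_x_nbr (c : gV C) : gadj C (mc (Some xF)) c -> c = mc None.
Proof.
have [[r|] ->] := subdiv_surj c => // /adj_SS [xr _].
by move: (x_isolated r); rewrite xr.
Qed.

Variables (A : graph n) (v : gV F) (mA : gV F -> gV A) (mAi : gV A -> gV F).
Hypotheses (mAK : cancel mA mAi) (mAiK : cancel mAi mA).
Hypothesis adj_A : forall r1 r2, gadj A (mA r1) (mA r2) <->
  [\/ gadj F r1 r2, r1 = xF /\ r2 = v | r1 = v /\ r2 = xF].
Hypothesis lab_A : forall i, glab A i = mA (glab F i).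
Hypothesis v_neq_x : v != xF.

Lemma add_edge_x_nbr (w : gV A) : gadj A (mA xF) w -> w = mA v.
Proof.
rewrite -(mAiK w) adj_A => -[xw | [_ ->] // | [e _]].
- by move: (x_isolated (mAi w)); rewrite xw.
- by move: v_neq_x; rewrite e eqxx.
Qed.

Variables (h : gV C -> gV A) (s t : gV C).
Hypothesis sym_C : symmetric (gadj C).
Hypothesis adj_st : gadj C s t.
Hypothesis h_st : h s = h t.
Hypothesis h_inj : forall c1 c2, h c1 = h c2 ->
  [\/ c1 = c2, c1 = s /\ c2 = t | c1 = t /\ c2 = s].
Hypothesis h_adj : forall w1 w2, gadj A w1 w2 <->
  (w1 <> w2 /\ exists c1 c2, [/\ h c1 = w1, h c2 = w2 & gadj C c1 c2]).
Hypothesis h_lab : forall i, glab A i = h (glab C i).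

Lemma contraction_x : h (mc (Some xF)) = mA xF.
Proof. by rewrite -lab_C -h_lab lab_A. Qed.

Lemma contraction_neq (c1 c2 : gV C) : c1 <> c2 -> c1 <> s -> c1 <> t -> h c1 <> h c2.
Proof. by move=> ? ? ? /h_inj []; [|case|case]. Qed.

Lemma contraction_adj (c1 c2 : gV C) : gadj C c1 c2 -> h c1 <> h c2 -> gadj A (h c1) (h c2).
Proof. by move=> c12 ne; apply/h_adj; split => //; exists c1, c2. Qed.

Lemma x_not_contracted : mc (Some xF) <> s /\ mc (Some xF) <> t.
Proof.
apply/Decidable.not_or_iff; move=> Xst.
have st_xW c : c = s \/ c = t -> c = mc None \/ c = mc (Some xF).
  case: Xst => X [] ->; rewrite -?X; try by right.
  - by left; apply: subdiv_x_nbr; rewrite X.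
  - by left; apply: subdiv_x_nbr; rewrite X sym_C.
have hW : h (mc None) = mA xF.
  rewrite -contraction_x; case: Xst => X.
  - by rewrite X -(subdiv_x_nbr (c := t)) -?h_st // X.
  - by rewrite X -(subdiv_x_nbr (c := s)) ?h_st // X sym_C.
have old_free r : r != xF -> mc (Some r) <> s /\ mc (Some r) <> t.
  move=> rx; apply/Decidable.not_or_iff => /st_xW [/esym/subdiv_new_neq // | /(can_inj mcK) [e]].
  by move: rx; rewrite e eqxx.
have h_pq r : r != xF -> gadj C (mc None) (mc (Some r)) -> h (mc (Some r)) = mA v.
  move=> rx Wr; have [rs rt] := old_free r rx.
  apply: add_edge_x_nbr; rewrite -hW; apply: contraction_adj => //.
  by apply/nesym/contraction_neq => //; apply/nesym/subdiv_new_neq.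
have hp := h_pq p p_neq_x (proj2 (adj_NS p) (Or31 _ _ erefl)).
have hq := h_pq q (isolated_nbr_neq sym_F x_isolated adj_pq) (proj2 (adj_NS q) (Or32 _ _ erefl)).
have [ps pt] := old_free p p_neq_x.
have pq : mc (Some p) <> mc (Some q).
  by move/(can_inj mcK) => -[e]; move: adj_pq; rewrite e irr_F.
by apply: (contraction_neq pq ps pt); rewrite hp hq.
Qed.

Lemma contraction_new : h (mc None) = mA v.
Proof.
have [Xs Xt] := x_not_contracted.
apply: add_edge_x_nbr; rewrite -contraction_x; apply: contraction_adj; first by apply/adj_SN/Or33.
by apply: contraction_neq => //; apply/nesym/subdiv_new_neq.
Qed.

Hypothesis XF : is_Xforest F.

(* Otherwise h would be injective near the new vertex, whose degree 3 is smaller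
   than the degree of v in A: at least 3 in F, plus the new edge to x. *)
Lemma new_contracted : mc None = s \/ mc None = t.
Proof.
have [/orP [/eqP | /eqP] | ] := boolP ((mc None == s) || (mc None == t)); [by left | by right |].
rewrite negb_or => /andP [/eqP Ws /eqP Wt]; exfalso.
have h_W c : h c = h (mc None) -> c = mc None.
  by case/h_inj => [// | [_ e] | [_ e]]; [case: Wt | case: Ws].
have v_unl : ~~ labeled F v.
  apply/existsP => -[i /eqP e].
  have := h_W (glab C i); rewrite -h_lab lab_A e contraction_new lab_C => /(_ erefl).
  by move/esym/subdiv_new_neq.
have deg_A : #|[pred w | gadj A (mA v) w]| <= 3.
  apply: leq_trans (card_size [:: h (mc (Some p)); h (mc (Some q)); h (mc (Some xF))]).
  apply/subset_leq_card/subsetP => w; rewrite inE -contraction_new => /h_adj [_ [c1 [c2 [/h_W -> <- Wc2]]]].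
  have [[r|] ec2] := subdiv_surj c2; rewrite ec2 in Wc2 *; last by rewrite (negbTE adj_NN) in Wc2.
  by case/adj_NS: Wc2 => ->; rewrite !inE eqxx ?orbT.
have : 4 <= #|[pred w | gadj A (mA v) w]|.
  have sub : mA @: (xF |: [set r | gadj F v r]) \subset [pred w | gadj A (mA v) w].
    apply/subsetP => w /imsetP [r + ->]; rewrite !inE => /orP [/eqP -> | vr]; apply/adj_A.
    - by apply: Or33.
    - by apply: Or31.
  apply: leq_trans (subset_leq_card sub).
  rewrite card_imset; last exact: can_inj mAK.
  rewrite cardsU1 inE sym_F (negbTE (x_isolated v)) add1n ltnS.
  have [_ _ _ deg_F] := XF; apply: leq_trans (deg_F v v_unl) _.
  by apply/subset_leq_card/subsetP => r; rewrite !inE.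
lia.
Qed.

Lemma contracted_partner : exists2 r, r = p \/ r = q & h (mc (Some r)) = mA v.
Proof.
have [Xs Xt] := x_not_contracted.
have partner c : gadj C (mc None) c -> c <> mc (Some xF) ->
    exists2 r, r = p \/ r = q & c = mc (Some r).
  have [[r|] ->] := subdiv_surj c; last by rewrite (negbTE adj_NN).
  by case/adj_NS => -> // _; [exists p; [left |] | exists q; [right |]].
case: new_contracted => W.
- have Wt : gadj C (mc None) t by rewrite W.
  have [r pq_r tr] := partner t Wt (nesym Xt).
  by exists r => //; rewrite -tr -h_st -W contraction_new.
- have Ws : gadj C (mc None) s by rewrite W sym_C.
  have [r pq_r sr] := partner s Ws (nesym Xs).
  by exists r => //; rewrite -sr h_st -W contraction_new.
Qed.

(* Away from the new vertex the contraction is an injective label- and adjacency-preserving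
   map from F into A = F + {x, v}; by rigidity it is the identity, and applied to the
   partner of the new vertex it yields v. *)
Let restr r := mAi (h (mc (Some r))).

Lemma restr_mA r : mA (restr r) = h (mc (Some r)).
Proof. exact: mAiK. Qed.

Lemma restr_inj : injective restr.
Proof.
move=> r1 r2 /(congr1 mA); rewrite !restr_mA => /h_inj [/(can_inj mcK) [] // | [e1 e2] | [e1 e2]];
  case: new_contracted => W; [move: e1 | move: e2 | move: e2 | move: e1];
  by rewrite -W => /esym/subdiv_new_neq.
Qed.

Lemma restr_lab i : restr (glab F i) = glab F i.
Proof. by rewrite /restr -lab_C -h_lab lab_A mAK. Qed.

Lemma restr_adj r1 r2 : gadj F r1 r2 -> gadj F (restr r1) (restr r2).
Proof.
move=> r12.
have ne : h (mc (Some r1)) <> h (mc (Some r2)).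
  by rewrite -!restr_mA => /(can_inj mAK) /restr_inj e; move: r12; rewrite e irr_F.
have : gadj A (h (mc (Some r1))) (h (mc (Some r2))).
  case: (boolP ([&& r1 == p & r2 == q] || [&& r1 == q & r2 == p])) => [pq12 | npq]; last first.
    apply: contraction_adj ne; apply/adj_SS; split => // -[] [e1 e2];
    by move: npq; rewrite e1 e2 !eqxx ?orbT.
  have [r pq_r hr] := contracted_partner; rewrite -contraction_new in hr.
  have [[e1 o2] | [e2 o1]] : (r1 = r /\ (r2 = p \/ r2 = q)) \/ (r2 = r /\ (r1 = p \/ r1 = q)).
    by case/orP: pq12 => /andP [/eqP e1 /eqP e2]; case: pq_r => er; subst; tauto.
  - rewrite e1 hr in ne *; apply: contraction_adj ne; apply/adj_NS.
    by case: o2 => ->; [apply: Or31 | apply: Or32].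
  - rewrite e2 hr in ne *; apply: contraction_adj ne; apply/adj_SN.
    by case: o1 => ->; [apply: Or31 | apply: Or32].
rewrite -!restr_mA adj_A -(restr_lab x) => -[// | [/restr_inj e _] | [_ /restr_inj e]].
- by move: (x_isolated r2); rewrite -e r12.
- by move: (x_isolated r1); rewrite -e sym_F r12.
Qed.

Lemma subdiv_contraction_partner : v = p \/ v = q.
Proof.
have [r pq_r hr] := contracted_partner.
have gr : restr r = v by apply: (can_inj mAK); rewrite restr_mA hr.
by rewrite -gr (Xforest_rigid XF restr_inj restr_lab restr_adj).
Qed.

End SubdivAttach.

Section Subdiv.
Variables (n : nat) (F C : graph n) (x : 'I_n) (p q : gV F).
Local Notation xF := (glab F x).
Hypothesis XF : is_Xforest F.
Hypothesis x_isolated : forall r, ~~ gadj F xF r.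
Hypothesis p_neq_x : p != xF.
Hypothesis sub : is_subdiv_attach F C x p q.

Lemma subdiv_card : #|gV C| = #|gV F|.+1.
Proof. by case: sub => _ [mc [[bmc _ _ _ _] _]]; rewrite -(bij_eq_card bmc) card_option. Qed.

Lemma subdiv_contract_add_edge (v : gV F) (A : graph n) : v = p \/ v = q ->
  is_add_edge F A xF v -> exists s t, is_contraction C A s t.
Proof.
have [sy ir _ _] := XF.
have qnx := isolated_nbr_neq sy x_isolated (proj1 sub).
case=> -> hA; [case: sub | case: (subdiv_attach_sym sy sub)];
  move=> pq [mc [[[mci mcK mciK] SS NS SN NN] lab]]; exists (mc None).
- by exists (mc (Some p)); apply: (subdiv_contract_new sy ir p_neq_x pq mcK mciK SS NS SN NN lab hA).
- by exists (mc (Some q)); apply: (subdiv_contract_new sy ir qnx pq mcK mciK SS NS SN NN lab hA).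
Qed.

Lemma subdiv_contraction_add_edge (v : gV F) (A : graph n) (s t : gV C) :
  is_Xforest C -> v != xF -> is_add_edge F A xF v -> is_contraction C A s t -> v = p \/ v = q.
Proof.
move=> [syC _ _ _] vnx [mA [[mAi mAK mAiK] adj_A lab_A]] [st [h [_ hst hinj hadj hlab]]].
have [sy ir _ _] := XF.
case: sub => pq [mc [[[mci mcK mciK] SS NS SN NN] lab]].
exact: (subdiv_contraction_partner sy ir x_isolated p_neq_x pq mcK mciK SS NS SN NN lab
  mAK mAiK adj_A lab_A vnx syC st hst hinj hadj hlab XF).
Qed.

Lemma subdiv_arcs : is_Xforest C -> arcs C = arcs F + 4.
Proof.
move=> XC; have sF := Xforest_simple XF.
have [s [t ct]] := subdiv_contract_add_edge (or_introl erefl) (add_edgeP xF p).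
have xp : xF != p by rewrite eq_sym.
by rewrite -(contraction_arcs XC ct) (add_edge_arcs sF xp (x_isolated p) (add_edgeP xF p)) -addnA.
Qed.

Lemma covers_subdiv_add_edge (v : gV F) (A : graph n) :
  is_Xforest C -> is_Xforest A -> v != xF -> is_add_edge F A xF v ->
  hat_covers (Elt A) (Elt C) <-> v = p \/ v = q.
Proof.
move=> XC XA vnx hA.
have arcs_CA : arcs C = arcs A + 2.
  have xv : xF != v by rewrite eq_sym.
  by rewrite subdiv_arcs // (add_edge_arcs (Xforest_simple XF) xv (x_isolated v) hA) -addnA.
split.
- case/(contraction_of_covers XC arcs_CA) => [[s [t ct]] | ].
    exact: subdiv_contraction_add_edge ct.
  by rewrite subdiv_card (add_edge_card hA); lia.
- move=> /subdiv_contract_add_edge /(_ hA) [s [t ct]].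
  exact: covers_of_contraction XA XC ct arcs_CA.
Qed.

End Subdiv.

Theorem mainTheorem7 (n : nat)
  (Ci Cj Ck Fj Fk Fijk : graph n) (x : 'I_n) (u a b : gV Ci) (y : gV Fj) :
  5 <= n ->
  (* {C_i, C_j, C_k} is a critical triplet *)
  inC Ci -> inC Cj -> inC Ck ->
  (* (1) leaf x, leaf edge e_x = (x,u), adjacent internal edges
         e_x1 = (u,a), e_x2 = (u,b) *)
  deg Ci (glab Ci x) = 1 -> gadj Ci (glab Ci x) u ->
  a != b -> a != glab Ci x -> b != glab Ci x ->
  internal_edge Ci u a -> internal_edge Ci u b ->
  (* (2) F_j = C_i / e_x1, C_j <> C_i, both cover F_j *)
  is_contraction Ci Fj u a -> ~ iso Ci Cj ->
  hat_covers (Elt Fj) (Elt Ci) -> hat_covers (Elt Fj) (Elt Cj) ->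
  (* (3) F_k = C_i / e_x2, C_k <> C_i, both cover F_k *)
  is_contraction Ci Fk u b -> ~ iso Ci Ck ->
  hat_covers (Elt Fk) (Elt Ci) -> hat_covers (Elt Fk) (Elt Ck) ->
  (* F_ijk: delete from F_j the edge incident to the vertex labeled x *)
  gadj Fj (glab Fj x) y -> is_deletion Fj Fijk (glab Fj x) y ->
  forall (C : graph n) (p q : gV Fijk),
    inC C -> hat_lt (Elt Fijk) (Elt C) ->
    (* e(C) = (p,q), an edge of T(F_ijk) *)
    p != glab Fijk x -> is_subdiv_attach Fijk C x p q ->
  forall (A : hatS n) (A' : graph n) (v : gV Fijk),
    hat_covers (Elt Fijk) A ->
    (* v(A) = v, a vertex of T(F_ijk) *)
    A = Elt A' -> v != glab Fijk x -> is_add_edge Fijk A' (glab Fijk x) v ->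
    (hat_covers A (Elt C) <-> (v = p \/ v = q)).
Proof.
(* Of the critical triplet only the leaf x of C_i and the contraction of an edge away from x
   matter: together with the deletion they make x isolated in F_ijk. *)
move=> _ [XCi _] _ _ deg_x hxu _ ax _ _ _ hFj _ _ _ _ _ _ _ _ hdel C p q [XC _] _ pnx hsub
  A A' v [XF XA _ _] eA vnx hA; subst A.
have [_ irCi _ _] := XCi.
have [w nbr_x] := contraction_single_nbr irCi (deg1_nbr deg_x hxu) hxu ax hFj.
exact: covers_subdiv_add_edge XF (deletion_isolates nbr_x hdel) pnx hsub v A' XC XA vnx hA.
Qed.
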